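(* Let $X$ be an abelian variety over a field $K$ of characteristic different from $2$, $G=\bar\rho_{2,X}(\mathrm{Gal}(K))\subset\mathrm{Aut}_{\mathbb F_2}(X_2)$, and assume $\dim X=2$, $G\cong\mathbb A_5$, $X_2$ is a simple $G$-module, and $\mathrm{End}_G(X_2)\cong\mathbb F_4$. Then $X_2$, viewed as a vector space over $\mathbb F_4=\mathrm{End}_G(X_2)$, is a very simple $G$-module over $\mathbb F_4$.
   Context: $X_2$ is the group of points of order dividing $2$ of $X$ over an algebraic closure of $K$, with Galois action $\bar\rho_{2,X}$. Definition: for a vector space $V$ over a field $k$ and a representation $\rho:G\to\mathrm{Aut}_k(V)$, the $G$-module $V$ is very simple if for every $k$-subalgebra $R\subset\mathrm{End}_k(V)$ containing $\mathrm{Id}_V$ with $\rho(\sigma)R\rho(\sigma)^{-1}\subset R$ for all $\sigma\in G$, either $R=k\cdot\mathrm{Id}_V$ or $R=\mathrm{End}_k(V)$. *)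

From mathcomp Require Import all_boot all_order all_algebra all_fingroup all_solvable all_character.
Set Implicit Arguments. Unset Strict Implicit. Unset Printing Implicit Defensive.
Import GRing.Theory.
Local Open Scope ring_scope.

(* Model: V = row vectors 'rV[F]_m (acting on the right: v |-> v *m A),
   End_F(V) = 'M[F]_m.  A "scalar algebra" E (a set of matrices) plays the
   role of the field of scalars k; k-linear endomorphisms are the matrices
   commuting with E. *)

Definition commutant {F : fieldType} {m : nat} (S : 'M[F]_m -> Prop) : 'M[F]_m -> Prop :=
  fun A => forall B, S B -> A *m B = B *m A.

(* With E = the scalar matrices F . 1 this is literally the paper's
   definition for k = F. *)
Definition mx_very_simple_over {F : fieldType} {m : nat}
    (E : 'M[F]_m -> Prop) (G : 'M[F]_m -> Prop) : Prop :=
  forall R : 'M[F]_m -> Prop,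
    (forall r, R r -> commutant E r) ->
    R 1%:M ->
    (forall a r, R r -> R (a *: r)) ->
    (forall e r, E e -> R r -> R (e *m r)) ->
    (forall r s, R r -> R s -> R (r + s)) ->
    (forall r s, R r -> R s -> R (r *m s)) ->
    (forall g r, G g -> R r -> R (g *m r *m invmx g)) ->
    (forall r, R r <-> E r) \/ (forall r, R r <-> commutant E r).

Definition GLcent {F : finFieldType} {n : nat} (G : {group {'GL_n[F]}}) : {set 'M[F]_n.-1.+1} :=
  [set A | [forall g in G, A *m GLval g == GLval g *m A]].

Definition GLmats {F : finFieldType} {n : nat} (G : {group {'GL_n[F]}}) : 'M[F]_n.-1.+1 -> Prop :=
  fun A => exists2 g, g \in G & A = GLval g.

(* The invertible elements of R form a subgroup H of GL(X_2) normalised by G, and G is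
   simple, so G :&: H is 1 or G.  If G <= H, then R contains the linear span of G, which by
   Jacobson density is the whole of End_E(X_2).  If G :&: H = 1 and R contains some r outside
   E, then some power f = r^m is idempotent and one of r, 1 - r, f + e (e in E) is a unit of
   R outside E; hence E^x is a proper subgroup of H, |H| >= 2 |E^x| = 6, and the product set
   H G has at least 360 elements, although it lies in End_E(X_2) = M_2(F_4), which has only
   256 elements. *)

From mathcomp Require Import all_boot all_order all_algebra all_fingroup all_solvable all_character.
From mathcomp Require Import boolp.
Set Implicit Arguments. Unset Strict Implicit. Unset Printing Implicit Defensive.
Import GRing.Theory.
Local Open Scope ring_scope.

Definition division_subring (A : unitRingType) (S : {pred A}) :=
  divring_closed S /\ {in S, forall x, x != 0 -> x \is a GRing.unit}.

Lemma idempotent_addr_unit (R : unitRingType) (f e : R) :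
  f * f = f -> GRing.comm f e -> e \is a GRing.unit -> 1 + e \is a GRing.unit ->
  f + e \is a GRing.unit.
Proof.
move=> ff cfe ue ue1.
have ce : GRing.comm (f + e) e by apply: commr_sym; apply: commrD (commr_sym cfe) _.
have c1e : GRing.comm (f + e) (1 + e) by apply: commrD (commr1 _) ce.
have fe_f : (f + e) * f = (1 + e) * f by rewrite !mulrDl ff mul1r.
have fe_g : (f + e) * (1 - f) = e * (1 - f).
  by rewrite mulrDl !mulrBr !mulr1 ff subrr add0r.
have f_fe : f * (f + e) = (1 + e) * f by rewrite mulrDr ff mulrDl mul1r cfe.
have g_fe : (1 - f) * (f + e) = e * (1 - f).
  by rewrite mulrBl mul1r f_fe mulrDl mul1r opprD addrACA subrr add0r mulrBr mulr1.
apply/unitrP; exists (e^-1 * (1 - f) + (1 + e)^-1 * f); split.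
  by rewrite mulrDl -!mulrA g_fe f_fe !mulKr // subrK.
rewrite mulrDr !mulrA (commrV ce) (commrV c1e) -!mulrA fe_g fe_f !mulKr //.
exact: subrK.
Qed.

Lemma nilpotent_subr_unit (R : unitRingType) (x : R) n :
  x ^+ n = 0 -> 1 - x \is a GRing.unit.
Proof.
move=> xn0; have inv_sum : (1 - x) * \sum_(i < n) x ^+ i = 1.
  by rewrite -opprB mulNr -subrX1 xn0 sub0r opprK.
have : (1 - x) * \sum_(i < n) x ^+ i \is a GRing.unit by rewrite inv_sum unitr1.
rewrite unitrM_comm => [/andP[] //|].
apply: commr_sum => i _; apply/commrX/commr_sym.
exact: commrB (commr1 x) (commr_refl x).
Qed.

Section FiniteRing.

Variable A : finUnitRingType.
Implicit Types r : A.

Lemma exists_idempotent_expr r : exists2 m, (0 < m)%N & r ^+ (m + m) = r ^+ m.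
Proof.
have [a [p [p_gt0 rap]]] : exists a p, [/\ (0 < p)%N & r ^+ (a + p) = r ^+ a].
  have /injectivePn[i [j ne_ij]] : ~~ injectiveb (fun i : 'I_#|A|.+1 => r ^+ i).
    by apply/injectiveP => /leq_card; rewrite card_ord ltnn.
  wlog lt_ij : i j ne_ij / (i < j)%N => [hwlog|/= eq_ij].
    case: (ltngtP i j) => [lt_ij|lt_ji|/val_inj eq_ij]; last by case/eqP: ne_ij.
    - exact: hwlog.
    - by move=> eq_ij; apply: (hwlog j i); rewrite // eq_sym.
  exists i, (j - i)%N; split; first by rewrite subn_gt0.
  by rewrite subnKC 1?ltnW.
have periodic t : r ^+ (a + t * p) = r ^+ a.
  elim: t => [|t IHt]; first by rewrite mul0n addn0.
  by rewrite mulSn addnCA exprD IHt -exprD addnC.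
have periodic_from k t : (a <= k)%N -> r ^+ (k + t * p) = r ^+ k.
  move=> le_ak; rewrite -(subnKC le_ak) -addnA (addnC (k - a)%N) addnA.
  by rewrite exprD periodic -exprD.
exists (a.+1 * p)%N; first by rewrite muln_gt0.
by rewrite periodic_from // (leq_trans (leqnSn a) (leq_pmulr _ p_gt0)).
Qed.

Lemma exists_unit_notin (E S : {pred A}) :
  division_subring E -> (2 < #|E|)%N ->
  subring_closed S -> {subset E <= S} -> {in S & E, forall s e, GRing.comm s e} ->
  forall r, r \in S -> r \notin E ->
  exists u, [/\ u \in S, u \notin E & u \is a GRing.unit].
Proof.
move=> [Ediv Eunit] E_gt2 Sring sES cSE r Sr Er.
have [E1 EB _] := Ediv; have [_ ED] := GRing.zmod_closedD Ediv.
have [S1 SB SM] := Sring; have [_ SD] := GRing.zmod_closedD Sring.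
have Sf k : r ^+ k \in S by elim: k => [|k IHk]; rewrite ?S1 // exprS SM.
have [m m_gt0] := exists_idempotent_expr r; rewrite exprD; set f := r ^+ m => ff.
have [Ef | Ef] := boolP (f \in E); last first.
  have /subsetPn[e Ee] : ~~ (E \subset pred2 0 (-1)).
    apply/negP => /subset_leq_card; rewrite card2; apply/negP; rewrite -ltnNge.
    by apply: leq_ltn_trans E_gt2; case: (_ != _).
  rewrite !inE negb_or => /andP[e_neq0 e_neqN1].
  exists (f + e); split; first by rewrite SD ?Sf ?sES.
  - by apply: contra Ef => Efe; rewrite -(addrK e f) EB.
  apply: idempotent_addr_unit => //; first exact: cSE (Sf m) Ee.
    exact: Eunit.
  by rewrite Eunit ?ED // addrC addr_eq0.
have [f0 | f_neq0] := eqVneq f 0.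
  exists (1 - r); split; first by rewrite SB.
  - by apply: contra Er => E1r; rewrite -(subKr 1 r) EB.
  - exact: nilpotent_subr_unit f0.
exists r; split => //.
have f1 : f = 1 by apply: (mulrI (Eunit _ Ef f_neq0)); rewrite ff mulr1.
by rewrite -(unitrX_pos r m_gt0) -/f f1 unitr1.
Qed.

End FiniteRing.

Lemma proper_card_double (gT : finGroupType) (K H : {group gT}) :
  K \proper H -> (2 * #|K| <= #|H|)%N.
Proof.
case/andP=> sKH not_sHK; rewrite -(Lagrange sKH) mulnC leq_mul2l.
by rewrite indexg_gt1 not_sHK orbT.
Qed.

Definition ring_centraliser (A : finNzRingType) (E : {pred A}) : {set A} :=
  [set x | [forall e in E, x * e == e * x]].

Lemma ring_centraliserP (A : finNzRingType) (E : {pred A}) x :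
  reflect {in E, forall e, GRing.comm x e} (x \in ring_centraliser E).
Proof. by rewrite inE; apply: (iffP forall_inP) => cxE e /cxE /eqP. Qed.

Lemma ring_centraliser_mulr_closed (A : finNzRingType) (E : {pred A}) :
  mulr_closed (ring_centraliser E).
Proof.
split=> [|x y /ring_centraliserP cxE /ring_centraliserP cyE];
  apply/ring_centraliserP => e Ee.
  exact/commr_sym/commr1.
by apply/commr_sym/commrM; apply/commr_sym; [apply: cxE | apply: cyE].
Qed.

Section GLunits.

Variables (R : finComUnitRingType) (n : nat).
Implicit Types (S : {pred 'M[R]_n.+1}) (G : {group {'GL_n.+1[R]}}).

Definition GLunits S : {set {'GL_n.+1[R]}} := [set u : {'GL_n.+1[R]} | GLval u \in S].

Lemma group_set_GLunits S : mulr_closed S -> group_set (GLunits S).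
Proof.
case=> S1 SM; apply/group_setP; split; first by rewrite inE.
by move=> u v; rewrite !inE; apply: SM.
Qed.

Lemma card_GLunits S : #|GLunits S| = #|[pred x in S | x \is a GRing.unit]|.
Proof.
rewrite -(card_imset _ val_inj); apply: eq_card => x; rewrite inE.
apply/imsetP/andP => [[u Su ->] | [Sx ux]].
  by rewrite inE in Su; split=> //; apply: valP.
by exists (Sub x ux); rewrite ?inE SubK.
Qed.

Lemma card_GLunits_division_subring S : division_subring S -> #|GLunits S| = #|S|.-1.
Proof.
case=> Sdiv Sunit; have [S0 _] := GRing.zmod_closedD Sdiv.
rewrite card_GLunits [in RHS](cardD1 0) S0 /=; apply: eq_card => x; rewrite !inE.
have [-> | x_neq0] := eqVneq x 0; first by rewrite unitr0 andbF.
by apply/andP/idP => [[] // | Sx]; rewrite Sunit.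
Qed.

Lemma GLunits_normG S G :
  {in G, forall g : {'GL_n.+1[R]}, {in S, forall r, GLval g * r * (GLval g)^-1 \in S}} ->
  (G \subset 'N(GLunits S))%g.
Proof.
move=> SJ; apply/subsetP => g Gg; rewrite inE; apply/subsetP => _ /imsetP[u Su ->].
have Su' : GLval u \in S by rewrite inE in Su.
rewrite inE /= mulrA; have := SJ g^-1%g; rewrite groupV => /(_ Gg _ Su').
by rewrite /= invrK.
Qed.

Lemma card_GLunits_le S : (#|GLunits S| <= #|S|)%N.
Proof. by rewrite card_GLunits; apply/subset_leq_card/subsetP => x /andP[]. Qed.

Lemma TI_GLunits_sub_division_subring (E S C : {pred 'M[R]_n.+1}) G :
  division_subring E -> (2 < #|E|)%N ->
  subring_closed S -> {subset E <= S} -> {in S & E, forall s e, GRing.comm s e} ->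
  mulr_closed C -> {subset S <= C} -> (G \subset GLunits C)%g ->
  (GLunits S :&: G = 1)%g -> (#|C| < 2 * #|E|.-1 * #|G|)%N ->
  {subset S <= E}.
Proof.
move=> Ediv E_gt2 Sring sES cSE Cmul sSC sGC tiSG C_small r Sr; apply/contraT => Er.
have [u [Su Eu Uu]] := exists_unit_notin Ediv E_gt2 Sring sES cSE Sr Er.
have [E1 _ EM] := GRing.divring_closedBM Ediv.1; have [S1 _ SM] := Sring.
pose UE := Group (group_set_GLunits (conj E1 EM)).
pose US := Group (group_set_GLunits (conj S1 SM)).
pose UC := Group (group_set_GLunits Cmul).
have pUEUS : (UE \proper US)%g.
  rewrite properE; apply/andP; split.
    by apply/subsetP => v; rewrite !inE; apply: sES.
  by apply/subsetPn; exists (Sub u Uu); rewrite !inE SubK.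
have sUSC : (US \subset UC)%g by apply/subsetP => v; rewrite !inE; apply: sSC.
have := proper_card_double pUEUS; rewrite card_GLunits_division_subring // => le_E_US.
have := subset_leq_card (mul_subG sUSC sGC); rewrite TI_cardMg // => le_USG_UC.
have := leq_trans le_USG_UC (card_GLunits_le C).
by rewrite leqNgt (leq_trans C_small) // leq_mul2r le_E_US orbT.
Qed.

End GLunits.

Section RowAction.

Variables (F : finFieldType) (n : nat).
Local Notation V := 'rV[F]_n.+1.
Variable E : {set 'M[F]_n.+1}.
Hypothesis Ediv : division_subring E.

Let E1 : 1 \in E. Proof. by case: Ediv.1. Qed.
Let EB : {in E &, forall a b, a - b \in E}. Proof. by case: Ediv.1. Qed.
Let EM : {in E &, forall a b, a *m b \in E}. Proof. by case: (GRing.divring_closedBM Ediv.1). Qed.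
Let EV : {in E, forall a, invmx a \in E}.
Proof. by case: Ediv.1 => _ _ Ediv' a Ea; rewrite -[invmx a]mul1mx Ediv'. Qed.
Let E0 : 0 \in E. Proof. by rewrite -(subrr 1) EB. Qed.
Let Eunit : {in E, forall a, a != 0 -> a \in unitmx}. Proof. exact: Ediv.2. Qed.

Lemma row_mul_division_inj (v : V) : v != 0 -> {in E &, injective (mulmx v)}.
Proof.
move=> v_neq0 a b Ea Eb vab; apply/eqP; rewrite -subr_eq0; apply/contraR: v_neq0 => ab_neq0.
have Uab : a - b \in unitmx by rewrite Eunit ?EB.
by rewrite -(mulmxK Uab v) mulmxBr vab subrr mul0mx.
Qed.

Lemma division_subring_span2 : (#|E| ^ 2 = #|{: V}|)%N ->
  exists v1 v2 : V, forall v : V,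
    exists a, exists b, [/\ a \in E, b \in E & v = v1 *m a + v2 *m b].
Proof.
move=> cardE2.
pose v1 : V := delta_mx 0 0.
have v1_neq0 : v1 != 0 by apply/eqP => /matrixP/(_ 0 0)/eqP; rewrite !mxE oner_eq0.
have E_gt1 : (1 < #|E|)%N.
  by apply/card_gt1P; exists 0, 1; rewrite E0 E1 eq_sym oner_eq0.
have /subsetPn[v2 _ v2_out] : ~~ ([set: V] \subset (mulmx v1) @: E).
  apply/negP => /subset_leq_card; rewrite cardsT card_in_imset; last exact: row_mul_division_inj.
  by rewrite -cardE2 leqNgt -{1}(expn1 #|E|) ltn_exp2l.
pose psi (ab : 'M[F]_n.+1 * 'M[F]_n.+1) := v1 *m ab.1 + v2 *m ab.2.
have psi_inj : {in setX E E &, injective psi}.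
  move=> [a b] [a' b'] /setXP[Ea Eb] /setXP[Ea' Eb']; rewrite /psi /= => eq_psi.
  have eq_b : b = b'.
    apply/eqP; rewrite -subr_eq0; apply: contraR v2_out => bb_neq0.
    have v2_bb : v2 *m (b - b') = v1 *m (a' - a).
      by rewrite !mulmxBr -[v2 *m b](addKr (v1 *m a)) eq_psi addrA addrK addrC.
    apply/imsetP; exists ((a' - a) *m invmx (b - b')).
      by apply: EM; [apply: EB | apply/EV/EB].
    by rewrite mulmxA -v2_bb mulmxK // Eunit ?EB.
  by move: eq_psi; rewrite eq_b => /addIr /(row_mul_division_inj v1_neq0 Ea Ea') ->.
exists v1, v2 => v.
have : v \in psi @: setX E E.
  suff -> : psi @: setX E E = [set: V] by rewrite in_setT.
  apply/eqP; rewrite eqEcard subsetT cardsT card_in_imset // cardsX -cardE2 /=.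
  by rewrite mulnn.
by case/imsetP=> [[a b] /setXP[Ea Eb] ->]; exists a, b.
Qed.

Lemma card_ring_centraliser_division_subring : (#|E| ^ 2 = #|{: V}|)%N ->
  (#|ring_centraliser E| <= #|{: V}| ^ 2)%N.
Proof.
move=> cardE2; have [v1 [v2 span]] := division_subring_span2 cardE2.
pose phi (D : 'M[F]_n.+1) := (v1 *m D, v2 *m D).
have phi_inj : {in ring_centraliser E &, injective phi}.
  move=> D D' /ring_centraliserP cDE /ring_centraliserP cD'E [eq1 eq2].
  apply/eqP; rewrite -subr_eq0; apply/eqP/row_matrixP => i; rewrite row0 rowE.
  have [a [b [Ea Eb ->]]] := span (delta_mx 0 i).
  rewrite mulmxDl -!mulmxA !mulmxBr !mulmxE -(cDE a) // -(cD'E a) // -(cDE b) //.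
  by rewrite -(cD'E b) // -!mulmxE !mulmxA eq1 eq2 !subrr addr0.
rewrite -(card_in_imset phi_inj); apply: leq_trans (max_card _) _.
by rewrite card_prod mulnn.
Qed.

End RowAction.

Section GLcent.

Variables (F : finFieldType) (n : nat) (G : {group {'GL_n.+1[F]}}).

Lemma GLcentP A : reflect {in G, forall g, GRing.comm A (GLval g)} (A \in GLcent G).
Proof. by rewrite inE; apply: (iffP forall_inP) => cAG g /cAG /eqP. Qed.

Lemma GLcent_divring_closed : divring_closed (GLcent G).
Proof.
split=> [|a b /GLcentP caG /GLcentP cbG|a b /GLcentP caG /GLcentP cbG];
  apply/GLcentP => g Gg; first exact/commr_sym/commr1.
  by apply/commr_sym/commrB; apply/commr_sym; [apply: caG | apply: cbG].
by apply/commr_sym/commrM/commrV; apply/commr_sym; [apply: caG | apply: cbG].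
Qed.

Lemma GL_sub_GLunits_centraliser : (G \subset GLunits (ring_centraliser (GLcent G)))%g.
Proof.
apply/subsetP => g Gg; rewrite inE; apply/ring_centraliserP => e /GLcentP ceG.
exact/commr_sym/ceG.
Qed.

Lemma bicentraliser_GLcent_sub (S : {pred 'M[F]_n.+1}) :
  mx_irreducible (subg_repr (GLrepr F n) (subsetT G)) ->
  {in G, forall g : {'GL_n.+1[F]}, GLval g \in S} ->
  (forall a A, A \in S -> a *: A \in S) -> {in S &, forall A B, A + B \in S} ->
  {subset ring_centraliser (GLcent G) <= S}.
Proof.
move=> irrG SG SZ SD A /ring_centraliserP cAE.
have : (A \in 'C('C(enveloping_algebra_mx (subg_repr (GLrepr F n) (subsetT G)))))%MS.
  apply/cent_mxP => B; rewrite memmx_cent_envelop => /centgmxP cBG.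
  have EB : B \in GLcent G by apply/GLcentP => g /cBG.
  by rewrite !mulmxE (cAE B EB).
move/submx_trans/(_ (mx_Jacobson_density irrG))/envelop_mxP => [a ->].
apply: (big_ind (fun B => B \in S)) => [|B C|g Gg].
- by rewrite -(scale0r (GLval 1%g)) SZ // SG.
- exact: SD.
- exact/SZ/SG.
Qed.

End GLcent.

Lemma isog_Alt5 (gT : finGroupType) (G : {group gT}) :
  (G \isog 'Alt_('I_5))%g -> simple G /\ #|G| = 60%N.
Proof.
move=> isoG; rewrite (isog_simple isoG) simple_Alt5 ?card_ord //; split=> //.
apply/eqP; rewrite -(eqn_pmul2l (isT : 0 < 2)%N) (card_isog isoG) card_Alt card_ord //.
Qed.

Theorem corollary4p2 (G : {group {'GL_4['F_2]}}) :
  (G \isog 'Alt_('I_5))%g ->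
  mx_irreducible (subg_repr (GLrepr 'F_2 3) (subsetT G)) ->
  #|GLcent G| = 4%N ->
  (forall A, A \in GLcent G -> A != 0 -> A \in unitmx) ->
  mx_very_simple_over (fun A => A \in GLcent G) (GLmats G).
Proof.
move=> isoG irrG cardE unitE R RcE R1 RZ RE RD RM RG.
pose S : {pred 'M['F_2]_4} := fun A => `[< R A >].
have SP A : reflect (R A) (A \in S) := asboolP _.
have Ediv : division_subring (GLcent G) := conj (GLcent_divring_closed G) unitE.
have Sring : subring_closed S.
  split=> [|A B /SP RA /SP RB|A B /SP RA /SP RB]; apply/SP => //.
  by rewrite -scaleN1r; apply/RD/RZ.
  exact: RM.
have sES : {subset GLcent G <= S} by move=> e Ee; apply/SP; rewrite -[e]mulmx1; apply: RE.
have sSC : {subset S <= ring_centraliser (GLcent G)}.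
  by move=> A /SP /RcE cAE; apply/ring_centraliserP => e /cAE.
have [S1 _ SM] := Sring; pose H := Group (group_set_GLunits (conj S1 SM)).
have nHG : (G \subset 'N(H))%g.
  by apply: GLunits_normG => g Gg A /SP RA; apply/SP/RG => //; exists g.
have [/simpleP[_ simG] cardG] := isog_Alt5 isoG.
have /simG[GH1 | GH] : (G :&: H <| G)%g by rewrite /normal subsetIl normsI ?normG.
  (* 16 ^ 2 < 2 * 3 * 60 *)
  have C_small : (#|ring_centraliser (GLcent G)| < 2 * #|GLcent G|.-1 * #|G|)%N.
    apply: leq_ltn_trans (card_ring_centraliser_division_subring Ediv _) _.
      by rewrite cardE card_mx card_Fp.
    by rewrite cardE cardG card_mx card_Fp.
  have sSE : {subset S <= GLcent G}.
    apply: (TI_GLunits_sub_division_subring Ediv _ Sring sES _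
      (ring_centraliser_mulr_closed _) sSC (GL_sub_GLunits_centraliser G) _ C_small).
    - by rewrite cardE.
    - by move=> A e /sSC /ring_centraliserP cAE /cAE.
    - by rewrite setIC.
  by left=> r; split=> [/SP/sSE | /sES/SP].
right=> r; split=> [/RcE // | crE]; apply/SP.
apply: (bicentraliser_GLcent_sub irrG) => [g Gg | a A /SP RA | A B /SP RA /SP RB |].
- by move/setIidPl: GH => /subsetP/(_ g Gg); rewrite inE.
- exact/SP/RZ.
- exact/SP/RD.
by apply/ring_centraliserP => e /crE.
Qed.
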